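(* Let $\mathcal{H}$ be a real Hilbert space, $f:\mathcal{H}\to\mathbb{R}$ $\mu$-strongly convex and $L$-smooth with $0<\mu<L<\infty$, $g:\mathcal{H}\to\mathbb{R}\cup\{+\infty\}$ convex, proper and lower semicontinuous, $q=\mu/L$, and $x^\star$ the unique minimizer of $f+g$. Let the Prox-TMM iterates and the quantities $\mathcal{V}_k^\infty$ be as defined in the context. Then for every $k\in\mathbb{N}$ (i.e. $k\ge1$), $$\mathcal{V}_{k+1}^\infty\le(1-\sqrt q)^2\,\mathcal{V}_k^\infty.$$
   Context: $\operatorname{Prox}^{\gamma}_g(x)=\operatorname{argmin}_z\big(g(z)+\frac{1}{2\gamma}\|x-z\|^2\big)$. Prox-TMM from $x^0\in\mathcal{H}$: $z^0=x^0$, and for $k\ge0$: $y^k=\frac{2\sqrt q}{1+\sqrt q}z^k+\frac{1-\sqrt q}{1+\sqrt q}x^k$, $\bar z^{k+1}=(1-\sqrt q)z^k+\sqrt q\,y^k-\frac{1}{\sqrt qL}\nabla f(y^k)$, $z^{k+1}=\operatorname{Prox}^{1/(\sqrt qL)}_g(\bar z^{k+1})$, $x^{k+1}=y^k-\frac1L\nabla f(y^k)-\sqrt q(\bar z^{k+1}-z^{k+1})$. Define $\mathcal{I}_f(x,y)=f(x)-f(y)-\langle\nabla f(y),x-y\rangle-\frac{\mu}{2}\|x-y\|^2-\frac{1}{2(L-\mu)}\|\nabla f(x)-\nabla f(y)-\mu(x-y)\|^2$ and $\mathcal{I}_g(x,y,s)=g(x)-g(y)-\langle s,x-y\rangle$.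 For $k\ge1$ let $s_g^k=\sqrt qL(\bar z^k-z^k)$ (so $s_g^k\in\partial g(z^k)$), let $s_g^\star=-\nabla f(x^\star)$, and $$\mathcal{V}_k^\infty=(1-q)\mathcal{I}_f(y^{k-1},x^\star)+q\,\mathcal{I}_g(x^\star,z^k,s_g^k)+\sqrt q(\sqrt q-1)\mathcal{I}_g(z^k,x^\star,s_g^\star)+\frac1{2L}\|s_g^k-s_g^\star\|^2+\mu\|z^k-x^\star\|^2.$$ *)

From HB Require Import structures.
From mathcomp Require Import all_boot all_order all_algebra.
From mathcomp Require Import all_classical all_reals all_analysis.
Set Implicit Arguments. Unset Strict Implicit. Unset Printing Implicit Defensive.
Import Order.TTheory GRing.Theory Num.Theory.
Import numFieldNormedType.Exports.
Local Open Scope ring_scope.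

Section Defs.
Context {R : realType} {V : normedModType R}.

(* ip is an inner product on V inducing the norm of V (so V, when complete,
   is a real Hilbert space). *)
Definition inner_product_of (ip : V -> V -> R) : Prop :=
  [/\ forall x y, ip x y = ip y x,
      forall (a : R) x y z, ip (a *: x + y) z = a * ip x z + ip y z
    & forall x, ip x x = `|x| ^+ 2].

Definition is_gradient (ip : V -> V -> R) (f : V -> R) (gradf : V -> V) : Prop :=
  forall x, differentiable f x /\ forall h, 'd f x h = ip (gradf x) h.

Definition strongly_convex (mu : R) (f : V -> R) : Prop :=
  forall x y (t : R), 0 <= t <= 1 ->
    f (t *: x + (1 - t) *: y) <=
      t * f x + (1 - t) * f y - mu / 2 * t * (1 - t) * `|x - y| ^+ 2.

Definition L_smooth (L : R) (gradf : V -> V) : Prop :=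
  forall x y, `|gradf x - gradf y| <= L * `|x - y|.

Definition econvex (g : V -> \bar R) : Prop :=
  forall x y (t : R), 0 < t < 1 ->
    (g (t *: x + (1 - t) *: y)%R <= t%:E * g x + (1 - t)%:E * g y)%E.

Definition eproper (g : V -> \bar R) : Prop :=
  (forall x, g x != -oo%E) /\ exists x, g x != +oo%E.

Definition is_prox (g : V -> \bar R) (gamma : R) (x p : V) : Prop :=
  forall w, (g p + (`|x - p| ^+ 2 / (2 * gamma))%:E <=
             g w + (`|x - w| ^+ 2 / (2 * gamma))%:E)%E.

Definition I_f (ip : V -> V -> R) (mu L : R) (f : V -> R) (gradf : V -> V)
    (x y : V) : R :=
  f x - f y - ip (gradf y) (x - y) - mu / 2 * `|x - y| ^+ 2
  - 1 / (2 * (L - mu)) * `|gradf x - gradf y - mu *: (x - y)| ^+ 2.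

(* I_g(x,y,s), evaluated at points where g is finite (real value via fine) *)
Definition I_g (ip : V -> V -> R) (g : V -> \bar R) (x y s : V) : R :=
  fine (g x) - fine (g y) - ip s (x - y).

(* V_k^infty for k >= 1, with q = mu/L, s_g^k = sqrt q L (zbar^k - z^k),
   s_g^star = - grad f (xstar) *)
Definition Vinf (ip : V -> V -> R) (mu L : R) (f : V -> R) (gradf : V -> V)
    (g : V -> \bar R) (xstar : V) (y z zbar : nat -> V) (k : nat) : R :=
  let q := mu / L in
  let sk := (Num.sqrt q * L) *: (zbar k - z k) in
  let sstar := - gradf xstar in
  (1 - q) * I_f ip mu L f gradf (y k.-1) xstar
  + q * I_g ip g xstar (z k) sk
  + Num.sqrt q * (Num.sqrt q - 1) * I_g ip g (z k) xstar sstar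
  + 1 / (2 * L) * `|sk - sstar| ^+ 2
  + mu * `|z k - xstar| ^+ 2.

End Defs.

From HB Require Import structures.
From mathcomp Require Import all_boot all_order all_algebra.
From mathcomp Require Import all_classical all_reals all_analysis.
From mathcomp Require Import ring lra.
Import Order.TTheory GRing.Theory Num.Theory.
Import numFieldNormedType.Exports.
Local Open Scope ring_scope.

(* Write r = sqrt q and s^k for the subgradient of g at z^k produced by the prox
   step.  Identically in the iterates, (1 - r)^2 V_k - V_{k+1} is a combination,
   with weights that are nonnegative for 0 < r < 1, of seven nonnegative
   quantities: the interpolation inequalities I_f(y^{k-1}, y^k) >= 0 and
   I_f(xstar, y^k) >= 0 of the mu-strongly convex and L-smooth f, the subgradient
   inequalities of g at z^{k+1} and at z^k (prox steps) and at xstar (where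
   -grad f(xstar) is a subgradient by optimality), and two squared norms.  After
   substituting the recursion and expanding the inner products, the identity is
   a rational identity in r and L. *)

Lemma ler_of_leD_scaled {R : realFieldType} (a b c : R) :
  (forall t, 0 < t < 1 -> a <= b + t * c) -> a <= b.
Proof.
move=> H; have [c_le0|c_gt0] := leP c 0; first by have := H (1 / 2) ltac:(lra); nra.
rewrite leNgt; apply/negP => ba.
pose t := Num.min (1 / 2) ((a - b) / (2 * c)).
have t_gt0 : 0 < t by rewrite lt_min; apply/andP; split; [lra | apply: divr_gt0; lra].
have t_le : t <= (a - b) / (2 * c) by rewrite ge_min lexx orbT.
have t_le_half : t <= 1 / 2 by rewrite ge_min lexx.
have tc_le : t * c <= (a - b) / 2.
  have -> : (a - b) / 2 = (a - b) / (2 * c) * c by field; rewrite gt_eqF.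
  by rewrite ler_pM2r.
by have := H t ltac:(lra); lra.
Qed.

Section InnerProduct.
Context {R : realType} {V : normedModType R} {ip : V -> V -> R}.
Hypothesis ipP : inner_product_of ip.

Lemma ipC x y : ip x y = ip y x. Proof. by case: ipP. Qed.

Lemma ipZDl a x y z : ip (a *: x + y) z = a * ip x z + ip y z.
Proof. by case: ipP. Qed.

Lemma ip0l z : ip 0 z = 0.
Proof. by have := ipZDl 1 0 0 z; rewrite scaler0 addr0 mul1r; lra. Qed.

Lemma ipDl x y z : ip (x + y) z = ip x z + ip y z.
Proof. by rewrite -[x in LHS]scale1r ipZDl mul1r. Qed.

Lemma ipZl a x z : ip (a *: x) z = a * ip x z.
Proof. by rewrite -[_ *: x]addr0 ipZDl ip0l addr0. Qed.

Lemma ipNl x z : ip (- x) z = - ip x z.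
Proof. by rewrite -scaleN1r ipZl mulN1r. Qed.

Lemma ipDr x y z : ip z (x + y) = ip z x + ip z y.
Proof. by rewrite ipC ipDl !(ipC z). Qed.

Lemma ipZr a x z : ip z (a *: x) = a * ip z x.
Proof. by rewrite ipC ipZl ipC. Qed.

Lemma ipNr x z : ip z (- x) = - ip z x.
Proof. by rewrite ipC ipNl ipC. Qed.

Lemma ip_sym_half x y : ip x y = (ip x y + ip y x) / 2.
Proof. by rewrite (ipC y x); field. Qed.

Lemma sqr_norm_ip x : `|x| ^+ 2 = ip x x.
Proof. by case: ipP. Qed.

Lemma ip_le_young {c : R} u v : 0 < c -> 2 * ip u v <= `|u| ^+ 2 / c + c * `|v| ^+ 2.
Proof.
move=> c_gt0; have := sqr_ge0 `|u - c *: v|.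
rewrite !sqr_norm_ip !(ipDl, ipDr, ipNl, ipNr, ipZl, ipZr) (ipC v u) => sq_ge0.
rewrite -(ler_pM2l c_gt0).
have -> : c * (ip u u / c + c * ip v v) = ip u u + c * (c * ip v v).
  by field; rewrite gt_eqF.
nra.
Qed.

Lemma abs_ip_le {c : R} u v : 0 < c -> `|u| <= c * `|v| -> `|ip u v| <= c * `|v| ^+ 2.
Proof.
move=> c_gt0 uv; have u2 : `|u| ^+ 2 / c <= c * `|v| ^+ 2.
  have : `|u| ^+ 2 <= (c * `|v|) ^+ 2 by rewrite ler_sqr ?nnegrE // mulr_ge0 // ltW.
  by rewrite ler_pdivrMr //; lra.
have := ip_le_young u v c_gt0; have := ip_le_young (- u) v c_gt0.
by rewrite ipNl normrN ler_norml; lra.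
Qed.

End InnerProduct.

(* Atoms are returned as [(ip a c + ip c a) / 2] so that [field] sees the
   symmetry of [ip].  The expansion is proved structurally because rewriting
   the bilinearity laws in a large goal is very slow. *)
Ltac ip_lin ipP ip :=
  lazymatch goal with
  | |- ip (?a + ?b) ?c = _ =>
      etransitivity; [exact (ipDl ipP a b c) | eapply (congr2 +%R); ip_lin ipP ip]
  | |- ip ?c (?a + ?b) = _ =>
      etransitivity; [exact (ipDr ipP a b c) | eapply (congr2 +%R); ip_lin ipP ip]
  | |- ip (- ?a) ?c = _ =>
      etransitivity; [exact (ipNl ipP a c) | eapply (congr1 -%R); ip_lin ipP ip]
  | |- ip ?c (- ?a) = _ =>
      etransitivity; [exact (ipNr ipP a c) | eapply (congr1 -%R); ip_lin ipP ip]
  | |- ip (?k *: ?a) ?c = _ =>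
      etransitivity; [exact (ipZl ipP k a c) | eapply (congr1 ( *%R k)); ip_lin ipP ip]
  | |- ip ?c (?k *: ?a) = _ =>
      etransitivity; [exact (ipZr ipP k a c) | eapply (congr1 ( *%R k)); ip_lin ipP ip]
  | |- ip ?a ?c = _ => exact (ip_sym_half ipP a c)
  end.

Ltac ip_expand ipP ip :=
  repeat match goal with |- context [`|?u| ^+ 2] =>
    rewrite [`|u| ^+ 2](sqr_norm_ip ipP)
  end;
  repeat match goal with |- context [ip ?u ?v] =>
    match constr:((u, v)) with
    | (_ + _, _) => idtac | (_, _ + _) => idtac | (- _, _) => idtac
    | (_, - _) => idtac | (_ *: _, _) => idtac | (_, _ *: _) => idtac
    end;
    let e := fresh "e" in
    eassert (e : ip u v = _) by ip_lin ipP ip; rewrite e; clear e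
  end.

Section SmoothFunction.
Context {R : realType} {V : normedModType R} {ip : V -> V -> R}.
Hypothesis ipP : inner_product_of ip.
Context {f : V -> R} {gradf : V -> V}.
Hypothesis gradfP : is_gradient ip f gradf.

Lemma is_derive_along_line x d (t0 : R) :
  is_derive t0 1 (fun t : R => f (x + t *: d)) (ip (gradf (x + t0 *: d)) d).
Proof.
have [df_diff dfE] := gradfP (x + t0 *: d).
have quotE : (fun h : R => h^-1 *: (((fun t : R => f (x + t *: d)) \o shift t0) (h *: 1)
                 - f (x + t0 *: d))) =
             (fun h : R => h^-1 *: ((f \o shift (x + t0 *: d)) (h *: d) - f (x + t0 *: d))).
  apply/funext => h /=; congr (_ *: (f _ - _)).
  by rewrite -[h *: 1]/(h * 1) mulr1 scalerDl addrCA.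
apply: DeriveDef; first by rewrite /derivable quotE; exact: diff_derivable.
by rewrite /derive quotE -/(derive f _ d) deriveE // dfE.
Qed.

(* The quadratic correction [c t^2 |d|^2 / 2] is what later yields the
   constant [L / 2] rather than [L] in the Taylor bounds. *)
Lemma gradient_mvt (c : R) x d : exists2 s : R, 0 < s < 1 &
  f (x + d) - f x + c / 2 * `|d| ^+ 2 = ip (gradf (x + s *: d)) d + c * s * `|d| ^+ 2.
Proof.
pose phi (t : R) := f (x + t *: d) + c / 2 * `|d| ^+ 2 * (t * t).
have phi' (t : R) : is_derive t 1 phi (ip (gradf (x + t *: d)) d + c / 2 * `|d| ^+ 2 * (2 * t)).
  apply: is_deriveD; first exact: is_derive_along_line.
  apply: (is_derive_eq (is_deriveZ (c / 2 * `|d| ^+ 2)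
    (is_deriveM (is_derive_id t (1 : R)) (is_derive_id t (1 : R))))).
  by rewrite /= /GRing.scale /= !mulr1; ring.
have [s s01 mvt] := MVT ltr01 (fun t _ => phi' t)
  (derivable_within_continuous (fun t _ => @ex_derive _ _ _ _ _ _ _ (phi' t))).
exists s; first by move: s01; rewrite in_itv.
move: mvt; rewrite /phi scale1r scale0r !addr0 subr0 mulr1 mulr0 => mvt.
have -> : c * s * `|d| ^+ 2 = c / 2 * `|d| ^+ 2 * (2 * s) by field.
lra.
Qed.

Context {L : R}.
Hypothesis L_gt0 : 0 < L.
Hypothesis gradf_lip : L_smooth L gradf.

Lemma abs_ip_grad_sub_le u v : `|ip (gradf u - gradf v) (u - v)| <= L * `|u - v| ^+ 2.
Proof. by apply: (abs_ip_le ipP) => //; exact: gradf_lip. Qed.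

Lemma ip_grad_segment_le x d {s : R} : 0 < s ->
  `|ip (gradf (x + s *: d)) d - ip (gradf x) d| <= L * s * `|d| ^+ 2.
Proof.
move=> s_gt0; rewrite -(ipNl ipP) -(ipDl ipP) -(ler_pM2l s_gt0).
have := abs_ip_grad_sub_le (x + s *: d) x.
rewrite [x + _]addrC addrK (ipZr ipP) normrM normrZ (gtr0_norm s_gt0) exprMn.
lra.
Qed.

Lemma smooth_le_upper x y : f y <= f x + ip (gradf x) (y - x) + L / 2 * `|y - x| ^+ 2.
Proof.
have [s /andP[s_gt0 _]] := gradient_mvt (- L) x (y - x); rewrite subrKC => mvt.
have := ip_grad_segment_le x (y - x) s_gt0.
by rewrite ler_norml => /andP[_ ?]; lra.
Qed.

Lemma smooth_ge_lower x y : f x + ip (gradf x) (y - x) - L / 2 * `|y - x| ^+ 2 <= f y.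
Proof.
have [s /andP[s_gt0 _]] := gradient_mvt L x (y - x); rewrite subrKC => mvt.
have := ip_grad_segment_le x (y - x) s_gt0.
by rewrite ler_norml => /andP[? _]; lra.
Qed.

Context {mu : R}.
Hypothesis f_sconvex : strongly_convex mu f.

Lemma strongly_convex_first_order x y :
  f y + ip (gradf y) (x - y) + mu / 2 * `|x - y| ^+ 2 <= f x.
Proof.
apply: (@ler_of_leD_scaled _ _ _ ((mu + L) / 2 * `|x - y| ^+ 2)) => t /andP[t_gt0 t_lt1].
have seg : t *: x + (1 - t) *: y = y + t *: (x - y).
  by rewrite scalerBr scalerBl scale1r addrCA.
have t01 : 0 <= t <= 1 by rewrite !ltW.
have conv := f_sconvex x y t t01.
have lower := smooth_ge_lower y (y + t *: (x - y)).
rewrite seg in conv; rewrite [y + _ - y]addrC addKr in lower.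
rewrite (ipZr ipP) normrZ (gtr0_norm t_gt0) exprMn in lower.
rewrite -(ler_pM2l t_gt0); lra.
Qed.

Hypothesis mu_lt_L : mu < L.

(* With h := f - mu/2 |.|^2, convex and (L - mu)-smooth, [z] is the gradient
   step a - (grad h a - grad h b) / (L - mu); the two Taylor bounds of [f] at [z]
   add up to I_f exactly. *)
Lemma I_f_ge0 a b : 0 <= I_f ip mu L f gradf a b.
Proof.
pose z := a - (L - mu)^-1 *: (gradf a - gradf b - mu *: (a - b)).
have lower := strongly_convex_first_order z b.
have upper := smooth_le_upper a z.
have decomp : I_f ip mu L f gradf a b =
    (f z - (f b + ip (gradf b) (z - b) + mu / 2 * `|z - b| ^+ 2))
  + (f a + ip (gradf a) (z - a) + L / 2 * `|z - a| ^+ 2 - f z).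
  rewrite /I_f /z; ip_expand ipP ip.
  by field; rewrite subr_eq0 gt_eqF.
by rewrite decomp addr_ge0 // subr_ge0.
Qed.

End SmoothFunction.

Section ConvexMinimizer.
Context {R : realType} {V : normedModType R} {ip : V -> V -> R}.
Hypothesis ipP : inner_product_of ip.
Context {g : V -> \bar R}.

Lemma minimizer_fin_num (phi : V -> R) p w :
  (forall w, (g p + (phi p)%:E <= g w + (phi w)%:E)%E) ->
  g p != -oo%E -> g w \is a fin_num -> g p \is a fin_num.
Proof.
move=> p_min gp_ninf gw_fin; rewrite fin_numE gp_ninf /=.
by move: (p_min w); rewrite -(fineK gw_fin) -EFinD; case: (g p).
Qed.

Hypothesis g_convex : econvex g.

Lemma minimizer_subgradient (phi : V -> R) (s : V) (C : R) p w :
  (forall w, (g p + (phi p)%:E <= g w + (phi w)%:E)%E) ->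
  (forall w, phi w <= phi p - ip s (w - p) + C / 2 * `|w - p| ^+ 2) ->
  g p \is a fin_num -> g w \is a fin_num ->
  0 <= I_g ip g w p s.
Proof.
move=> p_min model gp_fin gw_fin.
apply: (@ler_of_leD_scaled _ _ _ (C / 2 * `|w - p| ^+ 2)) => t t01.
have /andP[t_gt0 _] := t01.
have seg : t *: w + (1 - t) *: p = p + t *: (w - p).
  by rewrite scalerBr scalerBl scale1r addrCA.
have := le_trans (p_min _) (leeD2r _ (g_convex w p t t01)).
rewrite -(fineK gp_fin) -(fineK gw_fin) -!EFinM -!EFinD lee_fin seg.
have := model (p + t *: (w - p)).
rewrite [p + _ - p]addrC addKr (ipZr ipP) normrZ (gtr0_norm t_gt0) exprMn.
move=> model_t min_t; rewrite /I_g -(ler_pM2l t_gt0); lra.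
Qed.

Lemma prox_subgradient (c : R) x p w : 0 < c -> is_prox g (1 / c) x p ->
  g p \is a fin_num -> g w \is a fin_num -> 0 <= I_g ip g w p (c *: (x - p)).
Proof.
move=> c_gt0 prox.
apply: (minimizer_subgradient (fun v => `|x - v| ^+ 2 / (2 * (1 / c))) _ c _ _ prox).
move=> v; have scaleE r : r / (2 * (1 / c)) = c / 2 * r by field; rewrite gt_eqF.
rewrite !scaleE; ip_expand ipP ip; lra.
Qed.

Lemma optimal_subgradient {f : V -> R} {gradf : V -> V} {L : R} {xs : V} w :
  is_gradient ip f gradf -> 0 < L -> L_smooth L gradf ->
  (forall w, ((f xs)%:E + g xs <= (f w)%:E + g w)%E) ->
  g xs \is a fin_num -> g w \is a fin_num -> 0 <= I_g ip g w xs (- gradf xs).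
Proof.
move=> gradfP L_gt0 gradf_lip xs_opt.
apply: (minimizer_subgradient f _ L) => v.
  by rewrite addeC [(g v + _)%E]addeC.
by rewrite (ipNl ipP) opprK; exact: (smooth_le_upper ipP gradfP L_gt0 gradf_lip).
Qed.

End ConvexMinimizer.

Section ProxTMM.
Context {R : realType} {V : normedModType R} {ip : V -> V -> R}.
Hypothesis ipP : inner_product_of ip.
Context {f : V -> R} {gradf : V -> V} {g : V -> \bar R} {mu L : R} {xstar : V}.
Context {x y z zbar : nat -> V}.
Hypotheses (mu_gt0 : 0 < mu) (mu_lt_L : mu < L).

Local Notation r := (Num.sqrt (mu / L)).
Local Notation s n := ((r * L) *: (zbar n - z n)).
Local Notation V_ := (Vinf ip mu L f gradf g xstar y z zbar).

Hypothesis iterP : forall k,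
  [/\ y k = (2 * r / (1 + r)) *: z k + ((1 - r) / (1 + r)) *: x k,
      zbar k.+1 = (1 - r) *: z k + r *: y k - (1 / (r * L)) *: gradf (y k),
      is_prox g (1 / (r * L)) (zbar k.+1) (z k.+1)
    & x k.+1 = y k - (1 / L) *: gradf (y k) - r *: (zbar k.+1 - z k.+1)].

Lemma sqrt_q_gt0 : 0 < r.
Proof. by rewrite sqrtr_gt0 divr_gt0 // (lt_trans mu_gt0). Qed.

Lemma sqrt_q_lt1 : r < 1.
Proof.
have L_gt0 := lt_trans mu_gt0 mu_lt_L.
by rewrite -sqrtr1 ltr_sqrt ?ltr01 // ltr_pdivrMr // mul1r.
Qed.

Lemma Vinf_succ_gap k :
  (1 - r) ^+ 2 * V_ k.+1 - V_ k.+2 =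
    (1 - r) ^+ 2 * (1 - r ^+ 2) * I_f ip mu L f gradf (y k) (y k.+1)
  + (1 - r ^+ 2) * (1 - (1 - r) ^+ 2) * I_f ip mu L f gradf xstar (y k.+1)
  + (1 - (1 - r) ^+ 2) * I_g ip g xstar (z k.+2) (s k.+2)
  + (1 - r) ^+ 2 * r * I_g ip g (z k.+2) (z k.+1) (s k.+1)
  + (1 + r) * (1 - (1 - r) ^+ 2) * I_g ip g (z k.+2) xstar (- gradf xstar)
  + 1 / (2 * L) * `|s k.+2 + gradf xstar - (1 - r) ^+ 2 *: (s k.+1 + gradf xstar)| ^+ 2
  + (1 - r) ^+ 2 * (1 - (1 - r) ^+ 2) / (2 * L) * `|s k.+1 + gradf xstar| ^+ 2.
Proof.
have [_ _ _ x_succ] := iterP k; have [y_succ zbar_succ _ _] := iterP k.+1.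
have L_gt0 := lt_trans mu_gt0 mu_lt_L.
have r_gt0 := sqrt_q_gt0; have r_lt1 := sqrt_q_lt1.
have mu_r : mu = r ^+ 2 * L by rewrite sqr_sqrtr ?divr_ge0 ?ltW // mulfVK ?gt_eqF.
rewrite /Vinf /I_f /I_g /= zbar_succ y_succ x_succ.
move: r_gt0 r_lt1 mu_r; move: (Num.sqrt (mu / L)) => r r_gt0 r_lt1 ->.
ip_expand ipP ip.
have r2_lt1 : r ^+ 2 < 1 by nra.
by field; rewrite !gt_eqF //; nra.
Qed.

Hypotheses (gradfP : is_gradient ip f gradf) (f_sconvex : strongly_convex mu f).
Hypotheses (gradf_lip : L_smooth L gradf) (g_convex : econvex g) (g_proper : eproper g).
Hypothesis xstar_opt : forall w, ((f xstar)%:E + g xstar <= (f w)%:E + g w)%E.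

Lemma g_xstar_fin_num : g xstar \is a fin_num.
Proof.
have [g_ninf [x0 gx0]] := g_proper.
apply: (minimizer_fin_num f _ x0 _ (g_ninf xstar)); last by rewrite fin_numE g_ninf.
by move=> w; rewrite addeC [(g w + _)%E]addeC.
Qed.

Lemma g_z_fin_num n : g (z n.+1) \is a fin_num.
Proof.
have [_ _ prox _] := iterP n.
exact: (minimizer_fin_num (fun w => `|zbar n.+1 - w| ^+ 2 / (2 * (1 / (r * L))))
  _ _ prox (g_proper.1 _) g_xstar_fin_num).
Qed.

Lemma Vinf_succ_le k : V_ k.+2 <= (1 - r) ^+ 2 * V_ k.+1.
Proof.
have L_gt0 := lt_trans mu_gt0 mu_lt_L.
have r_gt0 := sqrt_q_gt0; have r_lt1 := sqrt_q_lt1.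
have prox_ineq n w := prox_subgradient ipP g_convex _ _ _ w (mulr_gt0 r_gt0 L_gt0)
  (let: And4 _ _ prox _ := iterP n in prox) (g_z_fin_num n).
have opt_ineq w := optimal_subgradient ipP g_convex w gradfP L_gt0 gradf_lip xstar_opt
  g_xstar_fin_num.
have If_ge0 := I_f_ge0 ipP gradfP L_gt0 gradf_lip f_sconvex mu_lt_L.
have gz_fin := g_z_fin_num; have gxstar_fin := g_xstar_fin_num.
rewrite -subr_ge0 Vinf_succ_gap.
set r := Num.sqrt (mu / L) in r_gt0 r_lt1 *.
have r_ge0 := ltW r_gt0; have L2_ge0 : 0 <= 2 * L by lra.
have r1_ge0 : 0 <= 1 - r by lra.
have r2_ge0 : 0 <= 1 - r ^+ 2 by nra.
have r12_ge0 : 0 <= 1 - (1 - r) ^+ 2 by nra.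
have r1p_ge0 : 0 <= 1 + r by lra.
repeat apply: addr_ge0; apply: mulr_ge0; rewrite ?sqr_ge0 ?If_ge0 ?opt_ineq ?prox_ineq //.
all: repeat apply: mulr_ge0; rewrite ?invr_ge0 //.
Qed.

End ProxTMM.

Theorem lemma5 (R : realType) (V : completeNormedModType R)
  (ip : V -> V -> R) (f : V -> R) (gradf : V -> V) (g : V -> \bar R)
  (mu L : R) (xstar : V) (x y z zbar : nat -> V) :
  inner_product_of ip ->
  0 < mu -> mu < L ->
  is_gradient ip f gradf ->
  strongly_convex mu f ->
  L_smooth L gradf ->
  econvex g -> eproper g -> lower_semicontinuous g ->
  (forall w, ((f xstar)%:E + g xstar <= (f w)%:E + g w)%E) ->
  z 0%N = x 0%N ->
  (forall k,
     let q := mu / L in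
     [/\ y k = (2 * Num.sqrt q / (1 + Num.sqrt q)) *: z k
               + ((1 - Num.sqrt q) / (1 + Num.sqrt q)) *: x k,
         zbar k.+1 = (1 - Num.sqrt q) *: z k + Num.sqrt q *: y k
                     - (1 / (Num.sqrt q * L)) *: gradf (y k),
         is_prox g (1 / (Num.sqrt q * L)) (zbar k.+1) (z k.+1)
       & x k.+1 = y k - (1 / L) *: gradf (y k)
                  - Num.sqrt q *: (zbar k.+1 - z k.+1)]) ->
  forall k : nat, (1 <= k)%N ->
    Vinf ip mu L f gradf g xstar y z zbar k.+1
      <= (1 - Num.sqrt (mu / L)) ^+ 2 * Vinf ip mu L f gradf g xstar y z zbar k.
Proof.
move=> ipP mu_gt0 mu_lt_L gradfP f_sconvex gradf_lip g_convex g_proper _ xstar_opt _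
  iterP [//|k] _.
exact: Vinf_succ_le.
Qed.
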